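(* Let $A$ be a finite set and let $f\in A^A$ with $f\notin T$ be of type I, II or III. Then $M_f=\langle f\rangle\cup C$ is a minimal u-closed monoid; in particular $M_f=\overline{M_f}$. Moreover, $\mathrm{End}\,\mathrm{gQuord}\,M_f=\mathrm{End}\,\mathrm{Quord}\,M_f$.
   Context: $C$ is the set of all constant unary maps on $A$, $T=\{\mathrm{id}_A\}\cup C$, and $\langle f\rangle$ is the submonoid of $A^A$ generated by $f$. Types: (I) $f^2=f$; (II) $f^2$ is a constant $v$ and $|\{x\in A\mid fx=v\}|\ge3$; (III) $f$ is a permutation with $f^p=\mathrm{id}_A$ for some prime $p$ and $f$ has at least two cycles of length $p$. A translation of an $n$-ary operation $g$ is $x\mapsto g(a_1,\dots,a_{i-1},x,a_{i+1},\dots,a_n)$ with fixed $a_j$; $\mathrm{trl}(g)$ is the set of translations ($\{g\}$ for unary $g$); $N^*:=\{g\mid\mathrm{trl}(g)\subseteq N\}$. The u-closure $\overline M$ is the intersection of all monoids $N$ with $M\subseteq N\le A^A$ such that $N^*$ is a clone; $M$ is u-closed if $\overline M=M$. A minimal u-closed monoid is a u-closed monoid $M\le A^A$ with $T\subsetneq M$ such that every u-closed monoid properly contained in $M$ equals $T$. A relation $\rho\subseteq A^m$ is a generalized quasiorder if it is reflexive and for every $m\times m$-matrix over $A$ whose rows and columns all lie in $\rho$ the diagonal lies in $\rho$ (binary ones are exactly the quasiorders, i.e., reflexive transitive binary relations). $\mathrm{gQuord}\,M$ (resp. $\mathrm{Quord}\,M$) is the set of generalized quasiorders (resp. quasiorders)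 on $A$ preserved by all maps of $M$, and $\mathrm{End}\,Q$ is the set of all unary maps preserving every relation in $Q$. *)

From mathcomp Require Import all_boot.
Set Implicit Arguments. Unset Strict Implicit. Unset Printing Implicit Defensive.

Section UClosure.
Variable A : finType.

Definition mapset := (A -> A) -> Prop.

(* an operation of arity n.+1 (operations of positive arity) *)
Definition op (n : nat) := ('I_n.+1 -> A) -> A.

Definition opset := forall n : nat, op n -> Prop.

Definition clone (F : opset) : Prop :=
  (forall n (i : 'I_n.+1), F n (fun x => x i)) /\
  (forall m n (g : op m) (hs : 'I_m.+1 -> op n),
      F m g -> (forall j, F n (hs j)) -> F n (fun x => g (fun j => hs j x))).

Definition translation n (g : op n) (i : 'I_n.+1) (a : 'I_n.+1 -> A) : A -> A :=
  fun x => g (fun j => if j == i then x else a j).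

Definition Nstar (N : mapset) : opset :=
  fun n g => forall i a, N (translation g i a).

Definition submonoid (N : mapset) : Prop :=
  N (fun x => x) /\ (forall g h, N g -> N h -> N (fun x => g (h x))).

Definition subsetM (M N : mapset) : Prop := forall g, M g -> N g.
Definition eqM (M N : mapset) : Prop := forall g, M g <-> N g.

Definition uclosure (M : mapset) : mapset :=
  fun g => forall N, submonoid N -> subsetM M N -> clone (Nstar N) -> N g.

Definition u_closed (M : mapset) : Prop := eqM (uclosure M) M.

Definition Cset : mapset := fun g => exists c : A, g = (fun _ => c).
Definition Tset : mapset := fun g => g = (fun x => x) \/ Cset g.

Definition proper_sub (N M : mapset) : Prop :=
  subsetM N M /\ exists g, M g /\ ~ N g.

Definition minimal_uclosed (M : mapset) : Prop :=
  [/\ submonoid M, u_closed M, proper_sub Tset M &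
   forall N, submonoid N -> u_closed N -> proper_sub N M -> eqM N Tset].

Definition Mf (f : A -> A) : mapset :=
  fun g => (exists k : nat, g = iter k f) \/ Cset g.

Definition typeI (f : A -> A) : Prop := forall x, f (f x) = f x.
Definition typeII (f : A -> A) : Prop :=
  exists v : A, (forall x, f (f x) = v) /\ 3 <= #|[set x | f x == v]|.
Definition typeIII (f : A -> A) : Prop :=
  bijective f /\
  exists p, [/\ prime p, (forall x, iter p f x = x) &
    exists x y, [/\ order f x = p, order f y = p & ~~ fconnect f x y]].

Definition preserves m (h : A -> A) (rho : ('I_m -> A) -> Prop) : Prop :=
  forall r, rho r -> rho (fun i => h (r i)).

Definition gen_quasiorder m (rho : ('I_m -> A) -> Prop) : Prop :=
  (forall a : A, rho (fun _ => a)) /\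
  (forall X : 'I_m -> 'I_m -> A,
     (forall i, rho (X i)) -> (forall j, rho (fun i => X i j)) ->
     rho (fun i => X i i)).

Definition gQuord (M : mapset) m (rho : ('I_m -> A) -> Prop) : Prop :=
  gen_quasiorder rho /\ forall g, M g -> preserves g rho.

Definition quasiorder (r : A -> A -> Prop) : Prop :=
  (forall x, r x x) /\ (forall x y z, r x y -> r y z -> r x z).

Definition preserves2 (h : A -> A) (r : A -> A -> Prop) : Prop :=
  forall x y, r x y -> r (h x) (h y).

Definition Quord (M : mapset) (r : A -> A -> Prop) : Prop :=
  quasiorder r /\ forall g, M g -> preserves2 g r.

Definition End_gQuord (M : mapset) : mapset :=
  fun h => forall m rho, @gQuord M m rho -> preserves h rho.
Definition End_Quord (M : mapset) : mapset :=
  fun h => forall r, Quord M r -> preserves2 h r.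

End UClosure.

From mathcomp Require Import all_boot.
From Stdlib Require Import FunctionalExtensionality Classical.
Set Implicit Arguments. Unset Strict Implicit. Unset Printing Implicit Defensive.

(* The heart of the proof is End Quord M_f <= M_f.  For any pair (x, y), the
   least quasiorder containing the f-orbit of (x, y) is M_f-invariant, so an h
   in End Quord M_f must map (x, y) into it.  A non-constant h therefore sends
   every z into its own f-orbit.  For type III, pairs of points on different
   p-cycles force h to act as one power of f on all cycles; for types I and
   II, pairs (x, y) for which the diagonal together with (x, y) and
   (f x, f y) is already a quasiorder leave h only the choices id and f.
   Given this inclusion, the translations of a composite of operations of
   M_f^* preserve every M_f-invariant quasiorder coordinatewise, so M_f^* is
   a clone and M_f is u-closed; End gQuord M_f lies between M_f and
   End Quord M_f.  Minimality holds because every power of f outside T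
   generates f again. *)

Section UClosure.
Variable A : finType.
Implicit Types M N : mapset A.

Lemma Tset_sub_uclosure M : subsetM (@Tset A) (uclosure M).
Proof.
(* The constant c is a translation of the binary projection onto coordinate 0. *)
move=> g [->|[c ->]] N [N_id _] _ [proj _] //.
exact: proj 1 ord0 ord_max (fun _ => c).
Qed.

Lemma op_monotone m (g : op A m) (r : A -> A -> Prop) :
  quasiorder r -> (forall i a, preserves2 (translation g i a) r) ->
  forall u w, (forall j, r (u j) (w j)) -> r (g u) (g w).
Proof.
move=> [r_refl r_trans] g_mono u w uw.
pose mix k (j : 'I_m.+1) := if (j < k)%N then w j else u j.
suff mixP k : r (g u) (g (mix k)).
  by rewrite (_ : w = mix m.+1) //; apply: functional_extensionality => j; rewrite /mix ltn_ord.
elim: k => [|k IH].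
  by rewrite (_ : mix 0 = u) //; apply: functional_extensionality.
have [k_lt|k_ge] := ltnP k m.+1; last first.
  rewrite (_ : mix k.+1 = mix k) //; apply: functional_extensionality => j.
  by rewrite /mix ltnS (ltnW (leq_trans (ltn_ord j) k_ge)) (leq_trans (ltn_ord j) k_ge).
pose i := Ordinal k_lt.
have mix_k : g (mix k) = translation g i (mix k) (u i).
  congr g; apply: functional_extensionality => j.
  by case: eqP => [->|//]; rewrite /mix ltnn.
have mix_Sk : g (mix k.+1) = translation g i (mix k) (w i).
  congr g; apply: functional_extensionality => j.
  have [->|ne] := eqVneq j i; first by rewrite /mix ltnSn.
  rewrite /mix ltnS leq_eqVlt (_ : (j == k :> nat) = false) //.
  by apply: contraNF ne => /eqP j_k; apply/eqP; apply: val_inj.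
by apply: r_trans IH _; rewrite mix_k mix_Sk; apply: g_mono.
Qed.

Lemma Nstar_clone_of_End_Quord M :
  subsetM (@Tset A) M -> subsetM (End_Quord M) M -> clone (Nstar M).
Proof.
move=> TM EndM; split.
  move=> n i j a; apply: TM; rewrite /translation /=.
  by case: eqP => _; [left | right; exists (a i)].
move=> m n g hs Ng Nhs i a; apply: EndM => r [r_qo r_pres] x y rxy.
apply: (op_monotone r_qo) => [i' a'|j]; first exact: r_pres (Ng i' a').
exact: r_pres (Nhs j i a) x y rxy.
Qed.

Lemma u_closed_of_Nstar_clone M : submonoid M -> clone (Nstar M) -> u_closed M.
Proof. by move=> monM cloneM g; split=> [|Mg N _ MN _]; [apply | apply: MN]. Qed.

Lemma End_gQuord_eq_End_Quord M :
  subsetM (End_Quord M) M -> eqM (End_gQuord M) (End_Quord M).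
Proof.
move=> EndM h; split=> [Endh r [[r_refl r_trans] r_pres] x y rxy | /EndM Mh m rho [_ pres]].
  pose rho (t : 'I_2 -> A) := r (t ord0) (t ord_max).
  apply: (Endh 2 rho) (fun i => if i == ord0 then x else y) rxy.
  split=> [|g Mg t]; last exact: r_pres.
  by split=> [a|X rows cols]; [exact: r_refl | exact: r_trans (rows ord0) (cols ord_max)].
exact: pres.
Qed.

End UClosure.

Section PowersAndConstants.
Variables (A : finType) (f : A -> A).

Lemma Mf_submonoid : submonoid (Mf f).
Proof.
split=> [|g h]; first by left; exists 0.
case=> [[i ->]|[c ->]] Mh; last by right; exists c.
case: Mh => [[j ->]|[d ->]]; last by right; exists (iter i f d).
by left; exists (i + j); apply: functional_extensionality => x; rewrite iterD.
Qed.

Lemma Tset_sub_Mf : subsetM (@Tset A) (Mf f).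
Proof. by move=> g [->|Cg]; [left; exists 0 | right]. Qed.

Lemma iter_submonoid (N : mapset A) g l : submonoid N -> N g -> N (iter l g).
Proof. by move=> [N_id N_comp] Ng; elim: l => //= l IH; apply: N_comp. Qed.

Definition nontrivial_powers_generate :=
  forall k, ~ Tset (iter k f) -> exists l, iter l (iter k f) = f.

Lemma minimal_uclosed_Mf :
  ~ Tset f -> u_closed (Mf f) -> nontrivial_powers_generate -> minimal_uclosed (Mf f).
Proof.
move=> nTf ucl gen; split; [exact: Mf_submonoid | exact: ucl | | ].
  by split; [exact: Tset_sub_Mf | exists f; split=> //; left; exists 1].
move=> N monN uclN [NM [g [Mg Ng]]].
have TN : subsetM (@Tset A) N by move=> t Tt; apply/uclN; apply: Tset_sub_uclosure.
move=> h; split=> [Nh|]; last exact: TN.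
apply: NNPP => nTh; apply: Ng.
have [[k def_h]|Ch] := NM h Nh; last by case: nTh; right.
have [l gen_f] : exists l, iter l (iter k f) = f by apply: gen; rewrite -def_h.
have Nf : N f by rewrite -gen_f -def_h; apply: iter_submonoid.
by case: Mg => [[j ->]|Cg]; [apply: iter_submonoid | apply: TN; right].
Qed.

Lemma Quord_Mf (r : A -> A -> Prop) :
  quasiorder r -> (forall x y, r x y -> r (f x) (f y)) -> Quord (Mf f) r.
Proof.
move=> [r_refl r_trans] r_f; split=> // g [[k ->]|[c ->]] x y rxy //.
by elim: k => //= k IH; apply: r_f.
Qed.

(* [q] below, the intersection of all quasiorders containing the f-orbit of
   (x, y), is f-compatible, hence preserved by M_f. *)
Lemma End_Quord_Mf_orbit h x y (r : A -> A -> Prop) :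
  End_Quord (Mf f) h -> quasiorder r -> (forall i, r (iter i f x) (iter i f y)) ->
  r (h x) (h y).
Proof.
move=> Endh r_qo r_orbit.
pose q u v := forall s, quasiorder s -> (forall i, s (iter i f x) (iter i f y)) -> s u v.
suff: q (h x) (h y) by apply.
apply: (Endh q); last by move=> s _ /(_ 0).
apply: Quord_Mf.
  split=> [u s [s_refl _] _ | u v w quv qvw s s_qo s_orbit]; first exact: s_refl.
  exact: s_qo.2 _ _ _ (quv s s_qo s_orbit) (qvw s s_qo s_orbit).
move=> u v quv s [s_refl s_trans] s_orbit.
apply: (quv (fun u v => s (f u) (f v))) => [|i]; last exact: s_orbit i.+1.
by split=> [z|a b c]; [apply: s_refl | apply: s_trans].
Qed.

Lemma End_Quord_Mf_in_orbit h :
  End_Quord (Mf f) h -> ~ Cset h -> forall z, exists i, h z = iter i f z.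
Proof.
move=> Endh nconst z; apply: NNPP => not_orb; apply: nconst; exists (h z).
apply: functional_extensionality => w.
pose r u v := u = v \/ (exists i, u = iter i f z) /\ (exists j, v = iter j f w).
suff [//|[[i hz] _]] : r (h z) (h w) by case: not_orb; exists i.
apply: End_Quord_Mf_orbit Endh _ _ => [|i]; last by right; split; exists i.
split=> [u|u v t [->|[zu wv]] [<-|[vz wt]]]; by [left | right].
Qed.

Definition pair_rel x y u v := [\/ u = v, u = x /\ v = y | u = f x /\ v = f y].

Lemma pair_rel_quasiorder x y :
  (y = f x -> f x = f y) -> (x = f y -> f x = f y) -> quasiorder (pair_rel x y).
Proof.
move=> yfx xfy; split=> [u|u v w]; first exact: Or31.
case=> [<-|[-> ->]|[-> ->]] //.
  case=> [<-|[_ ->]|[y_fx ->]]; try by constructor 2.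
  by rewrite -(yfx y_fx) -y_fx; constructor 2.
case=> [<-|[fy_x ->]|[_ ->]]; try by constructor 3.
by rewrite (xfy (esym fy_x)) fy_x; constructor 2.
Qed.

End PowersAndConstants.

Section SquareIdempotent.
Variables (A : finType) (f : A -> A).
Hypothesis f3 : forall z, f (f (f z)) = f (f z).

Lemma iter_SS i z : iter i.+2 f z = f (f z).
Proof. by elim: i => // i IH; rewrite iterS IH f3. Qed.

Lemma End_Quord_Mf_in_orbit3 h : End_Quord (Mf f) h -> ~ Cset h ->
  forall z, [\/ h z = z, h z = f z | h z = f (f z)].
Proof.
move=> Endh nconst z; have [[|[|i]] ->] := End_Quord_Mf_in_orbit Endh nconst z.
- exact: Or31.
- exact: Or32.
- by rewrite iter_SS; apply: Or33.
Qed.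

Lemma End_Quord_Mf_pair_rel h x y : End_Quord (Mf f) h ->
  (y = f x -> f x = f y) -> (x = f y -> f x = f y) ->
  pair_rel f x y (f (f x)) (f (f y)) -> pair_rel f x y (h x) (h y).
Proof.
move=> Endh yfx xfy pxy; apply: End_Quord_Mf_orbit Endh (pair_rel_quasiorder yfx xfy) _.
by case=> [|[|i]]; [apply: Or32 | apply: Or33 | rewrite !iter_SS].
Qed.

End SquareIdempotent.

Section TypeI.
Variables (A : finType) (f : A -> A).
Hypothesis f_idem : typeI f.

Let f3 z : f (f (f z)) = f (f z). Proof. by rewrite !f_idem. Qed.

Lemma typeI_End_Quord_Mf : subsetM (End_Quord (Mf f)) (Mf f).
Proof.
move=> h Endh; have [Ch|nconst] := classic (Cset h); first by right.
have hz z : h z = z \/ h z = f z.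
  by case: (End_Quord_Mf_in_orbit3 f3 Endh nconst z) => ->; [left | right | rewrite f_idem; right].
left; have [h_id|/not_all_ex_not [a ha_a]] := classic (forall z, h z = z).
  by exists 0; apply: functional_extensionality.
exists 1; apply: functional_extensionality => c /=; apply: NNPP => hc_fc.
have ha : h a = f a by case: (hz a).
have hc : h c = c by case: (hz c).
have : pair_rel f a c (h a) (h c).
  apply: (End_Quord_Mf_pair_rel f3 Endh) => [->|->|]; rewrite ?f_idem //.
  by apply: Or33.
rewrite ha hc; case=> [fa_c|[fa_a _]|[_ c_fc]].
- by apply: hc_fc; rewrite hc -fa_c f_idem.
- by apply: ha_a; rewrite ha.
- by apply: hc_fc; rewrite hc.
Qed.

Lemma typeI_powers_generate : nontrivial_powers_generate f.
Proof.
move=> [|[|k]] nTk; [by case: nTk; left | by exists 1 | exists 1].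
apply: functional_extensionality => z; exact: etrans (iter_SS f3 k z) (f_idem z).
Qed.

End TypeI.

Section TypeII.
Variables (A : finType) (f : A -> A) (v : A).
Hypotheses (f2v : forall x, f (f x) = v) (fiber_v : 3 <= #|[set x | f x == v]|).

Lemma f_v : f v = v.
Proof. by rewrite -(f2v v) f2v. Qed.

Let f3 z : f (f (f z)) = f (f z). Proof. by rewrite !f2v. Qed.

Lemma exists_fiber_avoid a : exists w, [/\ f w = v, w <> v & w <> a].
Proof.
apply: NNPP => none.
have : [set x | f x == v] \subset [set v; a].
  apply/subsetP => w; rewrite !inE => /eqP fw; apply: NNPP => /negP.
  by rewrite negb_or => /andP [/eqP wv /eqP wa]; apply: none; exists w.
by move/subset_leq_card/(leq_trans fiber_v); rewrite cards2; case: (v != a).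
Qed.

Section Endomorphism.
Variable h : A -> A.
Hypotheses (Endh : End_Quord (Mf f) h) (nconst : ~ Cset h).

Lemma typeII_image z : [\/ h z = z, h z = f z | h z = v].
Proof. by rewrite -(f2v z); apply: End_Quord_Mf_in_orbit3. Qed.

Lemma typeII_fiber_dichotomy :
  (forall w, f w = v -> h w = w) \/ (forall w, f w = v -> h w = v).
Proof.
have [|/not_all_ex_not [x0]] := classic (forall w, f w = v -> h w = w); first by left.
move=> /(imply_to_and (f x0 = v)) [fx0 hx0]; right=> w fw.
have hx0v : h x0 = v by case: (typeII_image x0) => // ->.
have : pair_rel f x0 w (h x0) (h w).
  by apply: (End_Quord_Mf_pair_rel f3 Endh) => [_|_|]; rewrite ?fx0 ?fw ?f2v //; apply: Or31.
rewrite hx0v; case=> [//|[x0v _]|[_ ->//]].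
by case: hx0; rewrite hx0v.
Qed.

Lemma typeII_off_fiber z w : f z <> v -> f w = v -> w <> v -> w <> f z ->
  (h w = w -> h z = z) /\ (h w = v -> h z = f z \/ h z = v).
Proof.
move=> fz fw wv wfz.
have : pair_rel f z w (h z) (h w).
  apply: (End_Quord_Mf_pair_rel f3 Endh) => [wfz'|zfw|]; first by case: wfz.
    by case: fz; rewrite zfw fw f_v.
  by rewrite !f2v; apply: Or31.
case=> [hzw|[hz hw]|[hz hw]]; split=> hw'; try by [left | done].
- exfalso; move: hzw; rewrite hw'; case: (typeII_image z) => ->.
  + by move=> zw; case: fz; rewrite zw fw.
  + by move/esym.
  + by move/esym.
- by right; rewrite hzw hw'.
- by case: wv; rewrite -hw' hw.
- by case: wv; rewrite -{1}hw' hw fw.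
Qed.

Lemma typeII_id_or_f : (forall z, h z = z) \/ (forall z, h z = f z).
Proof.
have [h_fiber_id|h_fiber_v] := typeII_fiber_dichotomy; [left|right] => z.
  have [/h_fiber_id //|/eqP fz] := eqVneq (f z) v.
  have [w [fw wv wfz]] := exists_fiber_avoid (f z).
  by apply: (typeII_off_fiber fz fw wv wfz).1; apply: h_fiber_id.
have h_off_fiber x : f x <> v -> h x = f x \/ h x = v.
  move=> fx; have [w [fw wv wfx]] := exists_fiber_avoid (f x).
  by apply: (typeII_off_fiber fx fw wv wfx).2; apply: h_fiber_v.
have [y hy] : exists y, h y <> v.
  apply: NNPP => none; apply: nconst; exists v; apply: functional_extensionality => y.
  by apply: NNPP => hy; apply: none; exists y.
have fy : f y <> v by move/h_fiber_v.
have hyf : h y = f y by case: (h_off_fiber y fy).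
have [fz|/eqP fz] := eqVneq (f z) v; first by rewrite fz h_fiber_v.
case: (h_off_fiber z fz) => // hzv.
have : pair_rel f z y (h z) (h y).
  apply: (End_Quord_Mf_pair_rel f3 Endh) => [yfz|zfy|]; first by case: fy; rewrite yfz f2v.
    by case: fz; rewrite zfy f2v.
  by rewrite !f2v; apply: Or31.
rewrite hzv hyf; case=> [vfy|[vz _]|[vfz _]].
- by case: fy.
- by case: fz; rewrite -vz f_v.
- by case: fz.
Qed.

End Endomorphism.

Lemma typeII_End_Quord_Mf : subsetM (End_Quord (Mf f)) (Mf f).
Proof.
move=> h Endh; have [Ch|nconst] := classic (Cset h); first by right.
by left; case: (typeII_id_or_f Endh nconst) => eq_h; [exists 0 | exists 1];
  apply: functional_extensionality.
Qed.

Lemma typeII_powers_generate : nontrivial_powers_generate f.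
Proof.
move=> [|[|k]] nTk; [by case: nTk; left | by exists 1 | case: nTk; right; exists v].
by apply: functional_extensionality => z; rewrite iter_SS.
Qed.

End TypeII.

Section TypeIII.
Variables (A : finType) (f : A -> A) (p : nat).
Hypotheses (p_prime : prime p) (f_p : forall x, iter p f x = x) (f_inj : injective f).

Lemma iter_modp n z : iter n f z = iter (n %% p) f z.
Proof.
have iter_mulp q y : iter (q * p) f y = y.
  by elim: q => // q IH; rewrite mulSn iterD IH f_p.
by rewrite {1}(divn_eq n p) iterD iter_mulp.
Qed.

Lemma iter_eq_of_order x i k : order f x = p -> iter i f x = iter k f x ->
  forall z, iter i f z = iter k f z.
Proof.
move=> ox eq_ik z; rewrite iter_modp [RHS]iter_modp.
have mod_lt n : n %% p < order f x by rewrite ox ltn_mod prime_gt0.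
by rewrite -(findex_iter (mod_lt i)) -(findex_iter (mod_lt k)) -!iter_modp eq_ik.
Qed.

Lemma iter_disjoint_orbits a b i j : ~~ fconnect f a b -> iter i f a <> iter j f b.
Proof.
move=> nab eq_ij; case/negP: nab.
by apply: connect_trans (fconnect_iter f i a) _; rewrite eq_ij fconnect_sym // fconnect_iter.
Qed.

Lemma typeIII_same_power h a b : End_Quord (Mf f) h -> ~ Cset h -> ~~ fconnect f a b ->
  exists i, h a = iter i f a /\ h b = iter i f b.
Proof.
move=> Endh nconst nab.
pose r u v := u = v \/ exists i, u = iter i f a /\ v = iter i f b.
have [eq_h|//] : r (h a) (h b).
  apply: End_Quord_Mf_orbit Endh _ _ => [|i]; last by right; exists i.
  split=> [u|u v w [->|[i [-> ->]]] [<-|[j [eq_ji ->]]]]; try by left.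
  - by right; exists j.
  - by right; exists i.
  - by case: (iter_disjoint_orbits nab (esym eq_ji)).
have [m hm] := End_Quord_Mf_in_orbit Endh nconst a.
have [n hn] := End_Quord_Mf_in_orbit Endh nconst b.
by case: (iter_disjoint_orbits (i:=m) (j:=n) nab); rewrite -hm -hn.
Qed.

Lemma typeIII_End_Quord_Mf x0 y0 : order f x0 = p -> order f y0 = p -> ~~ fconnect f x0 y0 ->
  subsetM (End_Quord (Mf f)) (Mf f).
Proof.
move=> ox oy nxy h Endh; have [Ch|nconst] := classic (Cset h); first by right.
have [k [hx hy]] := typeIII_same_power Endh nconst nxy.
left; exists k; apply: functional_extensionality => z.
have [xz|nxz] := boolP (fconnect f x0 z).
  have nyz : ~~ fconnect f y0 z.
    by apply: contra nxy => yz; rewrite (connect_trans xz) // fconnect_sym.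
  have [i [hy' hz]] := typeIII_same_power Endh nconst nyz.
  by rewrite hz; apply: (iter_eq_of_order oy); rewrite -hy' hy.
have [i [hx' hz]] := typeIII_same_power Endh nconst nxz.
by rewrite hz; apply: (iter_eq_of_order ox); rewrite -hx' hx.
Qed.

Lemma typeIII_powers_generate : nontrivial_powers_generate f.
Proof.
move=> k nTk; have [k0|kp] := posnP (k %% p).
  by case: nTk; left; apply: functional_extensionality => x; rewrite iter_modp k0.
have [km kn def_km _] := egcdnP p kp.
have cop : gcdn (k %% p) p = 1.
  apply/eqP; rewrite -/(coprime _ _) coprime_modl coprime_sym prime_coprime //.
  by rewrite /dvdn -lt0n.
exists km; apply: functional_extensionality => x.
by rewrite -iterM iter_modp -modnMmr def_km cop modnMDl modn_small ?prime_gt1.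
Qed.

End TypeIII.

Theorem proposition5p2 (A : finType) (f : A -> A) :
  ~ Tset f -> typeI f \/ typeII f \/ typeIII f ->
  [/\ minimal_uclosed (Mf f),
      eqM (uclosure (Mf f)) (Mf f) &
      eqM (End_gQuord (Mf f)) (End_Quord (Mf f))].
Proof.
move=> nTf types.
have [End_sub gen] : subsetM (End_Quord (Mf f)) (Mf f) /\ nontrivial_powers_generate f.
  case: types => [f_idem|[[v [f2v fiber_v]]|[/bij_inj f_inj [p [p_prime f_p [x [y [ox oy nxy]]]]]]]].
  - exact: conj (typeI_End_Quord_Mf f_idem) (typeI_powers_generate f_idem).
  - exact: conj (typeII_End_Quord_Mf f2v fiber_v) (typeII_powers_generate f2v).
  - exact: conj (typeIII_End_Quord_Mf p_prime f_p f_inj ox oy nxy)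
                (typeIII_powers_generate p_prime f_p).
have ucl : u_closed (Mf f).
  exact: u_closed_of_Nstar_clone (Mf_submonoid f)
           (Nstar_clone_of_End_Quord (Tset_sub_Mf f) End_sub).
split; [exact: minimal_uclosed_Mf | exact: ucl | exact: End_gQuord_eq_End_Quord].
Qed.
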